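(* Let $v$ be the linear classifier defined by $\vec w\in\mathbb{R}^n$ and $q\in\mathbb{R}$, and let $i\neq j$. If $w_i\ge w_j>0$, then $\mathrm{Vol}(\mathit{Piv}_j)\le\mathrm{Vol}(\mathit{Piv}_i)$.
   Context: The linear classifier defined by $\vec w$ and $q$ is $v:[0,1]^n\to\{0,1\}$, $v(\vec x)=1$ iff $\vec x\cdot\vec w\ge q$. For $\vec x\in[0,1]^n$, $b\in[0,1]$, $(\vec x_{-k},b)$ is $\vec x$ with $k$-th coordinate replaced by $b$. $\mathit{Piv}_k=\{(\vec x,b)\in[0,1]^{n+1}: v(\vec x)=0,\ v(\vec x_{-k},b)=1\}$, and $\mathrm{Vol}$ is Lebesgue measure on $\mathbb{R}^{n+1}$. *)

From Stdlib Require Import Reals Lra.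
Open Scope R_scope.

Fixpoint fsum (m : nat) (f : nat -> R) : R :=
  match m with O => 0 | S m' => fsum m' f + f m' end.
Fixpoint fprod (m : nat) (f : nat -> R) : R :=
  match m with O => 1 | S m' => fprod m' f * f m' end.

(* A point of R^m is represented by p : nat -> R, only coordinates l < m matter. *)

(* Lebesgue (outer) measure on R^m: infimum of the total volume of countable
   covers by closed boxes [lo k, hi k].  [box_cover_bound m S c] says that S has
   such a cover with total volume (sum of the series) at most c. *)
Definition box_cover_bound (m : nat) (S : (nat -> R) -> Prop) (c : R) : Prop :=
  exists lo hi : nat -> nat -> R,
    (forall k l, lo k l <= hi k l) /\
    (forall p, S p -> exists k, forall l, (l < m)%nat -> lo k l <= p l <= hi k l) /\
    (forall N, fsum N (fun k => fprod m (fun l => hi k l - lo k l)) <= c).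

(* [is_Vol m S v] : v is the Lebesgue measure of S in R^m (greatest lower bound
   of the admissible cover volumes).  For Lebesgue-measurable S this is Vol S. *)
Definition is_Vol (m : nat) (S : (nat -> R) -> Prop) (v : R) : Prop :=
  (forall c, box_cover_bound m S c -> v <= c) /\
  (forall v', (forall c, box_cover_bound m S c -> v' <= c) -> v' <= v).

Definition dot (n : nat) (w x : nat -> R) : R := fsum n (fun l => w l * x l).

Definition classif (n : nat) (w : nat -> R) (q : R) (x : nat -> R) : bool :=
  if Rle_dec q (dot n w x) then true else false.

Definition replace_coord (x : nat -> R) (k : nat) (b : R) : nat -> R :=
  fun l => if Nat.eq_dec l k then b else x l.

(* Piv_k as a subset of [0,1]^{n+1}; a point p encodes (x, b) with
   x = (p 0, ..., p (n-1)) and b = p n. *)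
Definition Piv (n : nat) (w : nat -> R) (q : R) (k : nat) (p : nat -> R) : Prop :=
  (forall l, (l <= n)%nat -> 0 <= p l <= 1) /\
  classif n w q p = false /\
  classif n w q (replace_coord p k (p n)) = true.

From Stdlib Require Import Reals Lra Lia List ClassicalEpsilon.
Import ListNotations.
Open Scope R_scope.

(** Vol is Lebesgue outer measure, so it suffices to turn any box cover of [Piv_i] of
    total volume [c] into a box cover of [Piv_j] of total volume at most [c + eps].
    Let [H] be the halfspace [q <= sum_(l <> j) w_l x_l + w_j b].  A [j]-pivotal point
    either lies in [Piv_i] and in [H], or, because [w_i >= w_j > 0], replacing its
    [(x_i, x_j, b)] by [(x_j, b, x_i)] gives a point of [Piv_i] outside [H].  Since [w_j > 0],
    every box splits, up to an arbitrarily small loss of volume, into finitely many boxes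
    covering its part in [H] and finitely many covering its part outside [H]: cut it into a
    fine grid in the first [n] coordinates, on each cell of which the rest of the linear
    form varies little, and cut each cell once in the last coordinate.  Relabelling
    coordinates preserves the volume of boxes, so the two families together cover [Piv_j]
    with total volume at most [c + eps]. *)

Lemma replace_coord_eq (x : nat -> R) k b : replace_coord x k b k = b.
Proof. unfold replace_coord; destruct (Nat.eq_dec k k); congruence. Qed.

Lemma replace_coord_neq (x : nat -> R) k b l : l <> k -> replace_coord x k b l = x l.
Proof. unfold replace_coord; destruct (Nat.eq_dec l k); congruence. Qed.

Lemma fsum_ext m f g : (forall l, (l < m)%nat -> f l = g l) -> fsum m f = fsum m g.
Proof.
  induction m as [|m IH]; intros H; simpl; [reflexivity|].
  rewrite IH by (intros; apply H; lia). rewrite H by lia. reflexivity.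
Qed.

Lemma fsum_le m f g : (forall l, (l < m)%nat -> f l <= g l) -> fsum m f <= fsum m g.
Proof.
  induction m as [|m IH]; intros H; simpl; [lra|].
  assert (fsum m f <= fsum m g) by (apply IH; intros; apply H; lia).
  assert (f m <= g m) by (apply H; lia).
  lra.
Qed.

Lemma fsum_add m f g : fsum m (fun l => f l + g l) = fsum m f + fsum m g.
Proof. induction m as [|m IH]; simpl; [lra|]. rewrite IH; lra. Qed.

Lemma fsum_sub m f g : fsum m (fun l => f l - g l) = fsum m f - fsum m g.
Proof. induction m as [|m IH]; simpl; [lra|]. rewrite IH; lra. Qed.

Lemma fsum_div m f c : c <> 0 -> fsum m (fun l => f l / c) = fsum m f / c.
Proof. intros Hc. induction m as [|m IH]; simpl; [field; auto|]. rewrite IH; field; auto. Qed.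

Lemma fsum_S_l m f : fsum (S m) f = f 0%nat + fsum m (fun k => f (S k)).
Proof. induction m as [|m IH]; simpl in *; [lra|]. rewrite IH; lra. Qed.

Lemma fsum_le_length N N' f :
  (forall l, 0 <= f l) -> (N <= N')%nat -> fsum N f <= fsum N' f.
Proof.
  intros Hf HN. induction HN as [|N2 HN IH]; simpl; [lra|].
  pose proof (Hf N2); lra.
Qed.

Lemma fsum_mul_extract m k (c p : nat -> R) : (k < m)%nat ->
  fsum m (fun l => c l * p l) = fsum m (fun l => replace_coord c k 0 l * p l) + c k * p k.
Proof.
  induction m as [|m IH]; intros Hk; [lia|]. simpl.
  destruct (Nat.eq_dec k m) as [->|Hkm].
  - rewrite replace_coord_eq.
    rewrite (fsum_ext m (fun l => replace_coord c m 0 l * p l) (fun l => c l * p l)); [lra|].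
    intros l Hl. rewrite replace_coord_neq by lia. reflexivity.
  - rewrite IH by lia. rewrite replace_coord_neq by lia. lra.
Qed.

Lemma geometric_fsum eps K : fsum K (fun k => eps / 2 ^ S k) = eps - eps / 2 ^ K.
Proof.
  induction K as [|K IH]; [simpl; field|].
  change (fsum (S K) (fun k => eps / 2 ^ S k))
    with (fsum K (fun k => eps / 2 ^ S k) + eps / 2 ^ S K).
  rewrite IH. assert (2 ^ K <> 0) by (apply pow_nonzero; lra).
  simpl pow. field. auto.
Qed.

Lemma fprod_ext m f g : (forall l, (l < m)%nat -> f l = g l) -> fprod m f = fprod m g.
Proof.
  induction m as [|m IH]; intros H; simpl; [reflexivity|].
  rewrite IH by (intros; apply H; lia). rewrite H by lia. reflexivity.
Qed.

Lemma fprod_nonneg m f : (forall l, (l < m)%nat -> 0 <= f l) -> 0 <= fprod m f.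
Proof.
  induction m as [|m IH]; intros H; simpl; [lra|].
  apply Rmult_le_pos; [apply IH; intros|]; apply H; lia.
Qed.

Lemma fprod_extract m k f : (k < m)%nat -> fprod m f = f k * fprod m (replace_coord f k 1).
Proof.
  induction m as [|m IH]; intros Hk; [lia|]. simpl.
  destruct (Nat.eq_dec k m) as [->|Hkm].
  - rewrite replace_coord_eq.
    rewrite (fprod_ext m (replace_coord f m 1) f); [lra|].
    intros l Hl. apply replace_coord_neq. lia.
  - rewrite IH by lia. rewrite replace_coord_neq by lia. lra.
Qed.

Lemma fprod_replace_coord m k f v : (k < m)%nat ->
  fprod m (replace_coord f k v) = v * fprod m (replace_coord f k 1).
Proof.
  intros Hk. rewrite (fprod_extract m k) by auto. rewrite replace_coord_eq.
  f_equal. apply fprod_ext. intros l _. unfold replace_coord.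
  destruct (Nat.eq_dec l k); reflexivity.
Qed.

Definition swap (x y l : nat) : nat :=
  if Nat.eq_dec l x then y else if Nat.eq_dec l y then x else l.

Lemma swap_involutive x y l : swap x y (swap x y l) = l.
Proof.
  unfold swap.
  destruct (Nat.eq_dec l x); destruct (Nat.eq_dec l y); subst;
  repeat (destruct (Nat.eq_dec _ _); subst); congruence.
Qed.

Lemma swap_lt m x y l : (x < m)%nat -> (y < m)%nat -> (l < m)%nat -> (swap x y l < m)%nat.
Proof. unfold swap. destruct (Nat.eq_dec l x); [|destruct (Nat.eq_dec l y)]; lia. Qed.

Lemma fprod_swap m x y f : (x < m)%nat -> (y < m)%nat ->
  fprod m (fun l => f (swap x y l)) = fprod m f.
Proof.
  intros Hx Hy. destruct (Nat.eq_dec x y) as [<-|Hxy].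
  - apply fprod_ext. intros l _. unfold swap.
    destruct (Nat.eq_dec l x); subst; reflexivity.
  - set (g := fun l => f (swap x y l)).
    assert (Hgx : g x = f y) by (unfold g, swap; destruct (Nat.eq_dec x x); congruence).
    assert (Hgy : g y = f x).
    { unfold g, swap. destruct (Nat.eq_dec y x); [congruence|].
      destruct (Nat.eq_dec y y); congruence. }
    rewrite (fprod_extract m x g), (fprod_extract m x f) by auto.
    rewrite (fprod_extract m y (replace_coord g x 1)), (fprod_extract m y (replace_coord f x 1))
      by auto.
    rewrite !(replace_coord_neq _ x 1 y), Hgx, Hgy by congruence.
    replace (fprod m (replace_coord (replace_coord g x 1) y 1))
      with (fprod m (replace_coord (replace_coord f x 1) y 1)); [ring|].
    apply fprod_ext. intros l _. unfold replace_coord, g, swap.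
    destruct (Nat.eq_dec l y); [reflexivity|]. destruct (Nat.eq_dec l x); reflexivity.
Qed.
Definition lsum {A} (f : A -> R) (L : list A) : R := fold_right (fun x acc => f x + acc) 0 L.

Lemma lsum_app {A} (f : A -> R) L1 L2 : lsum f (L1 ++ L2) = lsum f L1 + lsum f L2.
Proof. induction L1 as [|x L1 IH]; simpl; [lra|]. rewrite IH; lra. Qed.

Lemma lsum_map {A B} (f : B -> R) (g : A -> B) L : lsum f (map g L) = lsum (fun x => f (g x)) L.
Proof. induction L as [|x L IH]; simpl; [reflexivity|]. rewrite IH; reflexivity. Qed.

Lemma lsum_flat_map {A B} (f : B -> R) (g : A -> list B) L :
  lsum f (flat_map g L) = lsum (fun x => lsum f (g x)) L.
Proof. induction L as [|x L IH]; simpl; [reflexivity|]. rewrite lsum_app, IH; reflexivity. Qed.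

Lemma lsum_le {A} (f g : A -> R) L : (forall x, In x L -> f x <= g x) -> lsum f L <= lsum g L.
Proof.
  induction L as [|x L IH]; simpl; intros H; [lra|].
  assert (f x <= g x) by auto. assert (lsum f L <= lsum g L) by auto. lra.
Qed.

Lemma lsum_ext {A} (f g : A -> R) L : (forall x, In x L -> f x = g x) -> lsum f L = lsum g L.
Proof. induction L as [|x L IH]; simpl; intros H; [reflexivity|]. rewrite H, IH; auto. Qed.

Lemma lsum_add {A} (f g : A -> R) L : lsum (fun x => f x + g x) L = lsum f L + lsum g L.
Proof. induction L as [|x L IH]; simpl; [lra|]. rewrite IH; lra. Qed.

Lemma lsum_mul_l {A} (f : A -> R) c L : lsum (fun x => c * f x) L = c * lsum f L.
Proof. induction L as [|x L IH]; simpl; [lra|]. rewrite IH; lra. Qed.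

Lemma lsum_seq_const c s M : lsum (fun _ : nat => c) (seq s M) = INR M * c.
Proof.
  revert s. induction M as [|M IH]; intros s; simpl seq; [simpl; lra|].
  cbn [lsum fold_right]. fold (lsum (fun _ : nat => c) (seq (S s) M)).
  rewrite IH, S_INR. lra.
Qed.

Lemma lsum_as_fsum {A} (f : A -> R) L d :
  lsum f L = fsum (length L) (fun k => f (nth k L d)).
Proof.
  induction L as [|x L IH]; [reflexivity|].
  change (length (x :: L)) with (S (length L)). rewrite fsum_S_l. simpl. rewrite IH. reflexivity.
Qed.

Record box := Box { blo : nat -> R; bhi : nat -> R }.

Definition box_len (b : box) (l : nat) : R := bhi b l - blo b l.
Definition box_vol (m : nat) (b : box) : R := fprod m (box_len b).
Definition box_wf (b : box) : Prop := forall l, blo b l <= bhi b l.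
Definition in_box (m : nat) (b : box) (p : nat -> R) : Prop :=
  forall l, (l < m)%nat -> blo b l <= p l <= bhi b l.

Lemma box_vol_nonneg m b : box_wf b -> 0 <= box_vol m b.
Proof. intros H. apply fprod_nonneg. intros l _. unfold box_len. pose proof (H l). lra. Qed.

Lemma nat_interval_of N x : (1 <= N)%nat -> 0 <= x <= INR N ->
  exists k, (k < N)%nat /\ INR k <= x <= INR k + 1.
Proof.
  induction N as [|N IH]; intros HN Hx; [lia|].
  destruct (Nat.eq_dec N 0) as [->|HN0].
  - exists 0%nat. simpl in *. split; [lia|lra].
  - destruct (Rle_dec x (INR N)).
    + destruct IH as [k [Hk Hk2]]; [lia|lra|]. exists k; split; [lia|lra].
    + exists N. rewrite S_INR in Hx. split; [lia|lra].
Qed.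

Section Grid.
Variable M : nat.
Hypothesis HM : (1 <= M)%nat.

Let INR_M_pos : 0 < INR M.
Proof. apply lt_0_INR. lia. Qed.

Definition slice (d : nat) (b : box) (k : nat) : box :=
  Box (replace_coord (blo b) d (blo b d + INR k * box_len b d / INR M))
      (replace_coord (bhi b) d (blo b d + INR (S k) * box_len b d / INR M)).

Lemma slice_wf d b k : box_wf b -> box_wf (slice d b k).
Proof.
  intros Hb l. unfold slice; cbn [blo bhi]. destruct (Nat.eq_dec l d) as [->|Hld].
  - rewrite !replace_coord_eq, S_INR.
    assert (0 <= box_len b d / INR M)
      by (apply Rle_mult_inv_pos; [unfold box_len; pose proof (Hb d)|]; lra).
    replace ((INR k + 1) * box_len b d / INR M)
      with (INR k * box_len b d / INR M + box_len b d / INR M) by (field; lra).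
    lra.
  - rewrite !replace_coord_neq by auto. apply Hb.
Qed.

Lemma slice_len d b k l :
  box_len (slice d b k) l = if Nat.eq_dec l d then box_len b d / INR M else box_len b l.
Proof.
  unfold box_len, slice; cbn [blo bhi]. destruct (Nat.eq_dec l d) as [->|Hld].
  - rewrite !replace_coord_eq, S_INR. destruct (Nat.eq_dec d d); [|congruence].
    unfold box_len. field. lra.
  - rewrite !replace_coord_neq by auto. destruct (Nat.eq_dec l d); [congruence|reflexivity].
Qed.

Lemma exists_slice d b x : box_wf b -> blo b d <= x <= bhi b d ->
  exists k, (k < M)%nat /\ blo (slice d b k) d <= x <= bhi (slice d b k) d.
Proof.
  intros Hb Hx.
  enough (exists k, (k < M)%nat /\ blo b d + INR k * box_len b d / INR M <= x <=
                                    blo b d + INR (S k) * box_len b d / INR M) as [k Hk].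
  { exists k. unfold slice; cbn [blo bhi]. rewrite !replace_coord_eq. exact Hk. }
  destruct (Req_dec (box_len b d) 0) as [L0|L0].
  - exists 0%nat. split; [lia|]. rewrite L0. unfold box_len in L0.
    replace (INR 0 * 0 / INR M) with 0 by (simpl; field; lra).
    replace (INR 1 * 0 / INR M) with 0 by (simpl; field; lra). lra.
  - assert (HL : 0 < box_len b d) by (unfold box_len in *; pose proof (Hb d); lra).
    set (t := (x - blo b d) * INR M / box_len b d).
    destruct (nat_interval_of M t HM) as [k [Hk [Hk1 Hk2]]].
    { unfold t. split.
      - apply Rle_mult_inv_pos; [apply Rmult_le_pos|]; lra.
      - apply (Rmult_le_reg_r (box_len b d)); [lra|].
        replace ((x - blo b d) * INR M / box_len b d * box_len b d)
          with ((x - blo b d) * INR M) by (field; lra).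
        unfold box_len in *. nra. }
    assert (Hx' : x = blo b d + t * box_len b d / INR M) by (unfold t; field; lra).
    exists k. split; [lia|]. rewrite S_INR. rewrite Hx'.
    split; apply Rplus_le_compat_l; unfold Rdiv; apply Rmult_le_compat_r;
      try (left; apply Rinv_0_lt_compat; lra); nra.
Qed.

Fixpoint grid (d : nat) (b : box) : list box :=
  match d with
  | O => [b]
  | S d' => flat_map (fun Q => map (slice d' Q) (seq 0 M)) (grid d' b)
  end.

Lemma grid_shape d B : box_wf B -> forall Q, In Q (grid d B) ->
  box_wf Q /\
  (forall l, (d <= l)%nat -> blo Q l = blo B l /\ bhi Q l = bhi B l) /\
  (forall l, (l < d)%nat -> box_len Q l = box_len B l / INR M).
Proof.
  intros HB. induction d as [|d IH]; intros Q HQ.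
  - destruct HQ as [<-|[]]. split; [auto|split]; [auto|lia].
  - simpl in HQ. apply in_flat_map in HQ. destruct HQ as [Q0 [HQ0 HQ]].
    apply in_map_iff in HQ. destruct HQ as [k [<- _]].
    destruct (IH Q0 HQ0) as [wf0 [same0 len0]].
    split; [|split].
    + apply slice_wf, wf0.
    + intros l Hl. unfold slice; cbn [blo bhi]. rewrite !replace_coord_neq by lia. apply same0; lia.
    + intros l Hl. rewrite slice_len. destruct (Nat.eq_dec l d) as [->|Hld].
      * unfold box_len. destruct (same0 d (le_n d)) as [-> ->]. reflexivity.
      * apply len0. lia.
Qed.

Lemma grid_cover d B m p : box_wf B -> in_box m B p ->
  exists Q, In Q (grid d B) /\ in_box m Q p.
Proof.
  intros HB Hp. induction d as [|d IH].
  - exists B. split; [left|]; auto.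
  - destruct IH as [Q0 [HQ0 Hin]].
    destruct (grid_shape d B HB Q0 HQ0) as [wf0 _].
    assert (Hk : exists k, (k < M)%nat /\ ((d < m)%nat ->
              blo (slice d Q0 k) d <= p d <= bhi (slice d Q0 k) d)).
    { destruct (Compare_dec.le_lt_dec m d) as [Hd|Hd].
      - exists 0%nat. split; [lia|]. lia.
      - destruct (exists_slice d Q0 (p d) wf0 (Hin d Hd)) as [k [Hk Hkp]]. eauto. }
    destruct Hk as [k [HkM Hkp]]. exists (slice d Q0 k). split.
    + simpl. apply in_flat_map. exists Q0. split; auto. apply in_map, in_seq. lia.
    + intros l Hl. destruct (Nat.eq_dec l d) as [->|Hld]; [auto|].
      unfold slice; cbn [blo bhi]. rewrite !replace_coord_neq by auto. auto.
Qed.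

Lemma grid_vol d B m : (d <= m)%nat ->
  lsum (box_vol m) (grid d B) = box_vol m B.
Proof.
  induction d as [|d IH]; intros Hd; [simpl; lra|].
  simpl grid. rewrite lsum_flat_map, <- IH by lia. apply lsum_ext. intros Q _.
  rewrite lsum_map.
  rewrite (lsum_ext _ (fun _ => box_len Q d / INR M * fprod m (replace_coord (box_len Q) d 1))).
  - rewrite lsum_seq_const. unfold box_vol. rewrite (fprod_extract m d (box_len Q)) by lia.
    field. lra.
  - intros k _. unfold box_vol. rewrite <- fprod_replace_coord by lia. apply fprod_ext.
    intros l _. rewrite slice_len. unfold replace_coord. destruct (Nat.eq_dec l d); reflexivity.
Qed.
End Grid.

Lemma mul_in_range c x y z : x <= z <= y ->
  Rmin (c * x) (c * y) <= c * z <= Rmax (c * x) (c * y).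
Proof.
  intros Hz. unfold Rmin, Rmax.
  destruct (Rle_lt_dec 0 c); destruct (Rle_dec (c * x) (c * y)); split; nra.
Qed.

Lemma Rmax_sub_Rmin_mul c x y : x <= y ->
  Rmax (c * x) (c * y) - Rmin (c * x) (c * y) = Rabs c * (y - x).
Proof.
  intros Hxy. unfold Rmin, Rmax, Rabs.
  destruct (Rcase_abs c); destruct (Rle_dec (c * x) (c * y)); nra.
Qed.

Definition clamp (lo hi x : R) : R := Rmin hi (Rmax lo x).

Lemma clamp_between lo hi x : lo <= hi -> lo <= clamp lo hi x <= hi.
Proof. intros. unfold clamp, Rmin, Rmax. repeat destruct (Rle_dec _ _); lra. Qed.

Lemma clamp_le lo hi t x : lo <= x <= hi -> t <= x -> clamp lo hi t <= x.
Proof. intros. unfold clamp, Rmin, Rmax. repeat destruct (Rle_dec _ _); lra. Qed.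

Lemma le_clamp lo hi t x : lo <= x <= hi -> x <= t -> x <= clamp lo hi t.
Proof. intros. unfold clamp, Rmin, Rmax. repeat destruct (Rle_dec _ _); lra. Qed.

Lemma clamp_gap lo hi t1 t2 : lo <= hi -> t1 <= t2 ->
  (hi - clamp lo hi t1) + (clamp lo hi t2 - lo) <= (hi - lo) + (t2 - t1).
Proof. intros. unfold clamp, Rmin, Rmax. repeat destruct (Rle_dec _ _); lra. Qed.

Lemma exists_nat_div_le x eps : 0 < eps -> exists M, (1 <= M)%nat /\ x / INR M <= eps.
Proof.
  intros Heps. destruct (INR_archimed eps x Heps) as [M0 HM0].
  exists (S M0). split; [lia|].
  assert (0 < INR (S M0)) by (apply lt_0_INR; lia).
  rewrite S_INR in *. apply (Rmult_le_reg_r (INR M0 + 1)); [lra|].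
  replace (x / (INR M0 + 1) * (INR M0 + 1)) with x by (field; lra). nra.
Qed.

Section Halfspace.
Variables (m : nat) (cf : nat -> R) (a q : R).
Hypothesis Ha : 0 < a.

Definition lin (p : nat -> R) : R := fsum m (fun l => cf l * p l).
Definition lin_min (b : box) : R := fsum m (fun l => Rmin (cf l * blo b l) (cf l * bhi b l)).
Definition lin_max (b : box) : R := fsum m (fun l => Rmax (cf l * blo b l) (cf l * bhi b l)).

Lemma lin_in_range b p : in_box (S m) b p -> lin_min b <= lin p <= lin_max b.
Proof.
  intros Hp. split; apply fsum_le; intros l Hl;
    destruct (mul_in_range (cf l) _ _ _ (Hp l ltac:(lia))); lra.
Qed.

Lemma lin_osc b : box_wf b -> lin_max b - lin_min b = fsum m (fun l => Rabs (cf l) * box_len b l).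
Proof.
  intros Hb. unfold lin_max, lin_min. rewrite <- fsum_sub. apply fsum_ext.
  intros l _. apply Rmax_sub_Rmin_mul, Hb.
Qed.

(** On [b] the value of [lin] stays in [[lin_min b, lin_max b]], so cutting the last
    coordinate at [(q - lin_max b) / a] and at [(q - lin_min b) / a] separates the two sides
    of the hyperplane up to a slab of width [(lin_max b - lin_min b) / a]. *)
Definition upper_part (b : box) : box :=
  Box (replace_coord (blo b) m (clamp (blo b m) (bhi b m) ((q - lin_max b) / a))) (bhi b).
Definition lower_part (b : box) : box :=
  Box (blo b) (replace_coord (bhi b) m (clamp (blo b m) (bhi b m) ((q - lin_min b) / a))).

Lemma upper_part_wf b : box_wf b -> box_wf (upper_part b).
Proof.
  intros Hb l. unfold upper_part; cbn [blo bhi]. destruct (Nat.eq_dec l m) as [->|Hl].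
  - rewrite replace_coord_eq. apply clamp_between, Hb.
  - rewrite replace_coord_neq by auto. apply Hb.
Qed.

Lemma lower_part_wf b : box_wf b -> box_wf (lower_part b).
Proof.
  intros Hb l. unfold lower_part; cbn [blo bhi]. destruct (Nat.eq_dec l m) as [->|Hl].
  - rewrite replace_coord_eq. apply clamp_between, Hb.
  - rewrite replace_coord_neq by auto. apply Hb.
Qed.

Lemma in_upper_part b p : in_box (S m) b p -> q <= lin p + a * p m -> in_box (S m) (upper_part b) p.
Proof.
  intros Hp Hq l Hl. unfold upper_part; cbn [blo bhi]. destruct (Nat.eq_dec l m) as [->|Hlm].
  - rewrite replace_coord_eq. split; [|apply Hp; lia].
    apply clamp_le; [apply Hp; lia|].
    destruct (lin_in_range b p Hp).
    apply (Rmult_le_reg_r a); [lra|]. unfold Rdiv. rewrite Rmult_assoc, Rinv_l by lra. lra.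
  - rewrite replace_coord_neq by auto. auto.
Qed.

Lemma in_lower_part b p : in_box (S m) b p -> lin p + a * p m < q -> in_box (S m) (lower_part b) p.
Proof.
  intros Hp Hq l Hl. unfold lower_part; cbn [blo bhi]. destruct (Nat.eq_dec l m) as [->|Hlm].
  - rewrite replace_coord_eq. split; [apply Hp; lia|].
    apply le_clamp; [apply Hp; lia|].
    destruct (lin_in_range b p Hp).
    apply (Rmult_le_reg_r a); [lra|]. unfold Rdiv. rewrite Rmult_assoc, Rinv_l by lra. lra.
  - rewrite replace_coord_neq by auto. auto.
Qed.

Lemma parts_vol b : box_wf b ->
  box_vol (S m) (upper_part b) + box_vol (S m) (lower_part b) <=
  box_vol (S m) b + (lin_max b - lin_min b) / a * box_vol m b.
Proof.
  intros Hb. unfold box_vol. simpl fprod.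
  rewrite (fprod_ext m (box_len (upper_part b)) (box_len b)),
          (fprod_ext m (box_len (lower_part b)) (box_len b))
    by (intros l Hl; unfold box_len, upper_part, lower_part; cbn [blo bhi];
        rewrite replace_coord_neq by lia; reflexivity).
  unfold box_len at 1 2 4, upper_part, lower_part; cbn [blo bhi]. rewrite !replace_coord_eq.
  assert (0 <= fprod m (box_len b)) by (apply box_vol_nonneg; auto).
  assert (Hlin : lin_min b <= lin_max b)
    by (apply fsum_le; intros l _; unfold Rmin, Rmax; destruct (Rle_dec _ _); lra).
  assert (Ht : (q - lin_max b) / a <= (q - lin_min b) / a)
    by (unfold Rdiv; apply Rmult_le_compat_r; [left; apply Rinv_0_lt_compat|]; lra).
  pose proof (clamp_gap (blo b m) (bhi b m) _ _ (Hb m) Ht) as Hgap.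
  replace ((q - lin_min b) / a - (q - lin_max b) / a) with ((lin_max b - lin_min b) / a) in Hgap
    by (field; lra).
  unfold box_len in *. nra.
Qed.

Lemma grid_lin_osc M (HM : (1 <= M)%nat) B : box_wf B -> forall Q, In Q (grid M m B) ->
  lin_max Q - lin_min Q = fsum m (fun l => Rabs (cf l) * box_len B l) / INR M.
Proof.
  intros HB Q HQ. destruct (grid_shape M HM m B HB Q HQ) as [wfQ [_ lenQ]].
  assert (0 < INR M) by (apply lt_0_INR; lia).
  rewrite lin_osc by auto. rewrite <- fsum_div by lra. apply fsum_ext.
  intros l Hl. rewrite lenQ by auto. field. lra.
Qed.

Record halfspace_split_of (B : box) (eps : R) (L1 L2 : list box) : Prop := {
  split_wf1 : forall b, In b L1 -> box_wf b;
  split_wf2 : forall b, In b L2 -> box_wf b;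
  split_cover1 : forall p, in_box (S m) B p -> q <= lin p + a * p m ->
    exists b, In b L1 /\ in_box (S m) b p;
  split_cover2 : forall p, in_box (S m) B p -> lin p + a * p m < q ->
    exists b, In b L2 /\ in_box (S m) b p;
  split_vol : lsum (box_vol (S m)) L1 + lsum (box_vol (S m)) L2 <= box_vol (S m) B + eps
}.

Lemma halfspace_split B eps : box_wf B -> 0 < eps -> exists L1 L2, halfspace_split_of B eps L1 L2.
Proof.
  intros HB Heps.
  set (K := fsum m (fun l => Rabs (cf l) * box_len B l)).
  set (V := box_vol m B).
  destruct (exists_nat_div_le (V * K / a) eps Heps) as [M [HM Hsmall]].
  assert (HMpos : 0 < INR M) by (apply lt_0_INR; lia).
  set (Qs := grid M m B).
  exists (map upper_part Qs), (map lower_part Qs). constructor.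
  - intros b Hb. apply in_map_iff in Hb. destruct Hb as [Q [<- HQ]].
    apply upper_part_wf, (grid_shape M HM m B HB Q HQ).
  - intros b Hb. apply in_map_iff in Hb. destruct Hb as [Q [<- HQ]].
    apply lower_part_wf, (grid_shape M HM m B HB Q HQ).
  - intros p Hp Hq. destruct (grid_cover M HM m B (S m) p HB Hp) as [Q [HQ HpQ]].
    exists (upper_part Q). split; [apply in_map; auto|]. apply in_upper_part; auto.
  - intros p Hp Hq. destruct (grid_cover M HM m B (S m) p HB Hp) as [Q [HQ HpQ]].
    exists (lower_part Q). split; [apply in_map; auto|]. apply in_lower_part; auto.
  - rewrite !lsum_map, <- lsum_add.
    apply Rle_trans with (lsum (fun Q => box_vol (S m) Q + K / INR M / a * box_vol m Q) Qs).
    + apply lsum_le. intros Q HQ.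
      unfold K. rewrite <- (grid_lin_osc M HM B HB Q HQ).
      apply parts_vol, (grid_shape M HM m B HB Q HQ).
    + rewrite lsum_add, lsum_mul_l. unfold Qs. rewrite !grid_vol by lia. fold V.
      replace (K / INR M / a * V) with (V * K / a / INR M) by (field; lra). lra.
Qed.
End Halfspace.

Definition boxes_cover (m : nat) (F : nat -> list box) (A : (nat -> R) -> Prop) : Prop :=
  (forall k b, In b (F k) -> box_wf b) /\
  (forall p, A p -> exists k b, In b (F k) /\ in_box m b p).

Definition family_vol (m : nat) (F : nat -> list box) (K : nat) : R :=
  fsum K (fun k => lsum (box_vol m) (F k)).

Definition zero_box : box := Box (fun _ => 0) (fun _ => 0).

Lemma zero_box_wf : box_wf zero_box.
Proof. intros l; simpl; lra. Qed.

Section Flatten.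
Variable F : nat -> list box.

(** The padding box makes [flat K] have at least [K] entries, so that the [code]-th entry
    of the enumeration is already determined by [flat (S code)]. *)
Definition flat (K : nat) : list box := concat (map (fun k => zero_box :: F k) (seq 0 K)).

Definition flat_nth (code : nat) : box := nth code (flat (S code)) zero_box.

Lemma flat_S K : flat (S K) = flat K ++ zero_box :: F K.
Proof. unfold flat. rewrite seq_S, map_app, concat_app. simpl. rewrite app_nil_r. reflexivity. Qed.

Lemma flat_length K : (K <= length (flat K))%nat.
Proof. induction K as [|K IH]; [simpl; lia|]. rewrite flat_S, length_app. simpl. lia. Qed.

Lemma flat_prefix K K' : (K <= K')%nat -> exists r, flat K' = flat K ++ r.
Proof.
  induction 1 as [|K' _ [r Hr]]; [exists nil; rewrite app_nil_r; reflexivity|].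
  exists (r ++ zero_box :: F K'). rewrite flat_S, Hr, app_assoc. reflexivity.
Qed.

Lemma flat_nth_eq code K : (code < length (flat K))%nat ->
  flat_nth code = nth code (flat K) zero_box.
Proof.
  intros H. unfold flat_nth.
  destruct (flat_prefix K (K + S code)) as [r1 H1]; [lia|].
  destruct (flat_prefix (S code) (K + S code)) as [r2 H2]; [lia|].
  pose proof (flat_length (S code)).
  rewrite <- (app_nth1 (flat K) r1 zero_box H), <- H1, H2, app_nth1; auto.
Qed.

Lemma flat_wf : (forall k b, In b (F k) -> box_wf b) -> forall K b, In b (flat K) -> box_wf b.
Proof.
  intros H K b Hb. apply in_concat in Hb. destruct Hb as [L [HL Hb]].
  apply in_map_iff in HL. destruct HL as [k [<- _]].
  destruct Hb as [<-|Hb]; [apply zero_box_wf|eauto].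
Qed.

Lemma flat_vol m K : lsum (box_vol (S m)) (flat K) = family_vol (S m) F K.
Proof.
  induction K as [|K IH]; [reflexivity|].
  rewrite flat_S, lsum_app, IH. unfold family_vol. simpl.
  unfold box_vol at 2. simpl. unfold box_len at 2. simpl. ring.
Qed.

Lemma box_cover_of_family m A c : boxes_cover (S m) F A ->
  (forall K, family_vol (S m) F K <= c) -> box_cover_bound (S m) A c.
Proof.
  intros [Hwf Hcov] Hsum.
  assert (Hwf_nth : forall code, box_wf (flat_nth code)).
  { intros code. unfold flat_nth.
    destruct (nth_in_or_default code (flat (S code)) zero_box) as [Hi| ->];
      eauto using flat_wf, zero_box_wf. }
  exists (fun k => blo (flat_nth k)), (fun k => bhi (flat_nth k)). split; [|split].
  - intros k l. apply Hwf_nth.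
  - intros p Hp. destruct (Hcov p Hp) as [k [b [Hb Hin]]].
    assert (Hb' : In b (flat (S k))).
    { rewrite flat_S. apply in_or_app. right. right. exact Hb. }
    destruct (In_nth _ _ zero_box Hb') as [code [Hcode Hnth]].
    exists code. rewrite (flat_nth_eq code (S k) Hcode), Hnth. exact Hin.
  - intros N. apply Rle_trans with (lsum (box_vol (S m)) (flat N)); [|rewrite flat_vol; apply Hsum].
    rewrite (lsum_as_fsum _ _ zero_box).
    apply Rle_trans with (fsum N (fun k => box_vol (S m) (nth k (flat N) zero_box))).
    + apply Req_le, fsum_ext. intros k Hk.
      pose proof (flat_length N). rewrite (flat_nth_eq k N) by lia. reflexivity.
    + apply fsum_le_length; [|apply flat_length].
      intros k. apply box_vol_nonneg.
      destruct (nth_in_or_default k (flat N) zero_box) as [Hi| ->];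
        eauto using flat_wf, zero_box_wf.
Qed.
End Flatten.

Lemma boxes_cover_app m F1 F2 (A B C : (nat -> R) -> Prop) :
  boxes_cover m F1 B -> boxes_cover m F2 C -> (forall p, A p -> B p \/ C p) ->
  boxes_cover m (fun k => F1 k ++ F2 k) A.
Proof.
  intros [wf1 cov1] [wf2 cov2] HA. split.
  - intros k b Hb. apply in_app_or in Hb. destruct Hb; eauto.
  - intros p Hp. destruct (HA p Hp) as [HB|HC].
    + destruct (cov1 p HB) as [k [b [Hb Hin]]]. exists k, b. split; [apply in_or_app|]; auto.
    + destruct (cov2 p HC) as [k [b [Hb Hin]]]. exists k, b. split; [apply in_or_app|]; auto.
Qed.

Lemma family_vol_app m F1 F2 K :
  family_vol m (fun k => F1 k ++ F2 k) K = family_vol m F1 K + family_vol m F2 K.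
Proof.
  unfold family_vol. rewrite <- fsum_add. apply fsum_ext. intros k _. apply lsum_app.
Qed.

Definition swap_box (x y : nat) (b : box) : box :=
  Box (fun l => blo b (swap x y l)) (fun l => bhi b (swap x y l)).

Lemma boxes_cover_swap m F A x y : (x < m)%nat -> (y < m)%nat -> boxes_cover m F A ->
  boxes_cover m (fun k => map (swap_box x y) (F k)) (fun p => A (fun l => p (swap x y l))).
Proof.
  intros Hx Hy [Hwf Hcov]. split.
  - intros k b Hb. apply in_map_iff in Hb. destruct Hb as [b0 [<- Hb0]].
    intros l. apply (Hwf k b0 Hb0).
  - intros p Hp. destruct (Hcov _ Hp) as [k [b [Hb Hin]]].
    exists k, (swap_box x y b). split; [apply in_map; auto|].
    intros l Hl. pose proof (Hin (swap x y l) (swap_lt m x y l Hx Hy Hl)) as H.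
    cbv beta in H. rewrite swap_involutive in H. exact H.
Qed.

Lemma family_vol_swap m F x y K : (x < m)%nat -> (y < m)%nat ->
  family_vol m (fun k => map (swap_box x y) (F k)) K = family_vol m F K.
Proof.
  intros Hx Hy. apply fsum_ext. intros k _. rewrite lsum_map. apply lsum_ext.
  intros b _. apply (fprod_swap m x y (box_len b) Hx Hy).
Qed.

Lemma halfspace_split_cover m A cf a q c eps : 0 < a -> 0 < eps -> box_cover_bound (S m) A c ->
  exists F1 F2,
    boxes_cover (S m) F1 (fun p => A p /\ q <= lin m cf p + a * p m) /\
    boxes_cover (S m) F2 (fun p => A p /\ lin m cf p + a * p m < q) /\
    forall K, family_vol (S m) F1 K + family_vol (S m) F2 K <= c + eps.
Proof.
  intros Ha Heps [lo [hi [Hwf [Hcov Hsum]]]].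
  destruct (choice (fun k (LL : list box * list box) =>
      halfspace_split_of m cf a q (Box (lo k) (hi k)) (eps / 2 ^ S k) (fst LL) (snd LL)))
    as [G HG].
  { intros k.
    assert (Hek : 0 < eps / 2 ^ S k) by (apply Rdiv_lt_0_compat; [lra|apply pow_lt; lra]).
    destruct (halfspace_split m cf a q Ha (Box (lo k) (hi k)) _ (fun l => Hwf k l) Hek)
      as [L1 [L2 HL]].
    exists (L1, L2). exact HL. }
  exists (fun k => fst (G k)), (fun k => snd (G k)). split; [|split].
  - split; [intros k; apply (HG k)|].
    intros p [Hp Hq]. destruct (Hcov p Hp) as [k Hk].
    destruct (HG k) as [_ _ Hcov1 _ _]. destruct (Hcov1 p Hk Hq) as [b Hb]. eauto.
  - split; [intros k; apply (HG k)|].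
    intros p [Hp Hq]. destruct (Hcov p Hp) as [k Hk].
    destruct (HG k) as [_ _ _ Hcov2 _]. destruct (Hcov2 p Hk Hq) as [b Hb]. eauto.
  - intros K. unfold family_vol. rewrite <- fsum_add.
    apply Rle_trans with (fsum K (fun k => box_vol (S m) (Box (lo k) (hi k)) + eps / 2 ^ S k)).
    + apply fsum_le. intros k _. apply (HG k).
    + rewrite fsum_add, geometric_fsum. pose proof (Hsum K).
      assert (0 < eps / 2 ^ K) by (apply Rdiv_lt_0_compat; [lra|apply pow_lt; lra]).
      unfold box_vol, box_len. simpl blo. simpl bhi. lra.
Qed.

Lemma box_cover_of_box m A b : box_wf b -> (forall p, A p -> in_box (S m) b p) ->
  box_cover_bound (S m) A (box_vol (S m) b).
Proof.
  intros Hb HA. apply (box_cover_of_family (fun k => if Nat.eqb k 0 then [b] else [])).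
  - split.
    + intros k b' Hb'. destruct (Nat.eqb k 0); [destruct Hb' as [<-|[]]; auto|destruct Hb'].
    + intros p Hp. exists 0%nat, b. split; [left|apply HA]; auto.
  - intros K. unfold family_vol. destruct K as [|K]; [simpl; apply box_vol_nonneg; auto|].
    rewrite fsum_S_l. simpl.
    replace (fsum K (fun _ => 0)) with 0; [lra|].
    induction K as [|K IH]; simpl; lra.
Qed.

Lemma is_Vol_exists m A : (exists c, box_cover_bound m A c) -> exists v, is_Vol m A v.
Proof.
  intros [c0 Hc0].
  destruct (completeness (fun x => forall c, box_cover_bound m A c -> x <= c)) as [v [Hub Hlub]].
  - exists c0. intros x Hx. apply Hx, Hc0.
  - exists 0. intros c [lo [hi [_ [_ Hs]]]]. apply (Hs 0%nat).
  - exists v. split.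
    + intros c Hc. apply Hlub. intros x Hx. apply Hx, Hc.
    + intros v' Hv'. apply Hub, Hv'.
Qed.

Lemma is_Vol_le m A B va vb : is_Vol m A va -> is_Vol m B vb ->
  (forall c eps, box_cover_bound m A c -> 0 < eps -> box_cover_bound m B (c + eps)) ->
  vb <= va.
Proof.
  intros [_ HA] [HB _] Htransfer. apply HA. intros c Hc.
  apply Rnot_lt_le. intros Hlt.
  assert (vb <= c + (vb - c) / 2) by (apply HB, Htransfer; auto; lra).
  lra.
Qed.

Lemma classif_true n w q x : classif n w q x = true <-> q <= dot n w x.
Proof. unfold classif. destruct (Rle_dec q (dot n w x)); split; intros; try discriminate; lra. Qed.

Lemma classif_false n w q x : classif n w q x = false <-> dot n w x < q.
Proof. unfold classif. destruct (Rle_dec q (dot n w x)); split; intros; try discriminate; lra. Qed.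

(** Why exchanging a pivotal [j] against [i] works: [(wi - wj) * (x - y) >= 0] for [x >= y]. *)
Lemma exchange_ineq q s a b c wi wj : wj <= wi -> 0 < wj ->
  s + wi * a + wj * c < q -> q <= s + wi * a + wj * b -> s + wj * c + wi * b < q ->
  s + wj * b + wi * c < q /\ s + wi * c + wj * a < q.
Proof.
  intros. assert (c < b) by nra. split; [nra|].
  destruct (Rle_dec a c); nra.
Qed.

Section Pivotal.
Variables (n : nat) (w : nat -> R) (q : R).

Definition dot_drop (k : nat) (p : nat -> R) : R := lin n (replace_coord w k 0) p.

Lemma dot_extract k p : (k < n)%nat -> dot n w p = dot_drop k p + w k * p k.
Proof. apply fsum_mul_extract. Qed.

Lemma dot_replace_coord k p b : (k < n)%nat ->
  dot n w (replace_coord p k b) = dot_drop k p + w k * b.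
Proof.
  intros Hk. rewrite (dot_extract k) by auto. rewrite replace_coord_eq. f_equal.
  apply fsum_ext. intros l _. unfold replace_coord.
  destruct (Nat.eq_dec l k); [ring|reflexivity].
Qed.

Lemma Piv_iff k p : (k < n)%nat -> Piv n w q k p <->
  (forall l, (l <= n)%nat -> 0 <= p l <= 1) /\
  dot_drop k p + w k * p k < q /\ q <= dot_drop k p + w k * p n.
Proof.
  intros Hk. unfold Piv.
  rewrite classif_false, classif_true, dot_replace_coord, (dot_extract k) by auto. tauto.
Qed.

Variables (i j : nat).
Hypotheses (Hi : (i < n)%nat) (Hj : (j < n)%nat) (Hij : i <> j).
Hypotheses (Hw : w j <= w i) (Hw0 : 0 < w j).

Definition dot_drop2 (p : nat -> R) : R := lin n (replace_coord (replace_coord w j 0) i 0) p.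

Lemma dot_drop_j p : dot_drop j p = dot_drop2 p + w i * p i.
Proof.
  unfold dot_drop, dot_drop2, lin. rewrite (fsum_mul_extract n i), replace_coord_neq by auto.
  reflexivity.
Qed.

Lemma dot_drop_i p : dot_drop i p = dot_drop2 p + w j * p j.
Proof.
  unfold dot_drop, dot_drop2, lin. rewrite (fsum_mul_extract n j), replace_coord_neq by auto.
  f_equal.
  apply fsum_ext. intros l _. unfold replace_coord.
  destruct (Nat.eq_dec l j); destruct (Nat.eq_dec l i); reflexivity.
Qed.

(** The relabelling [(x_i, x_j, b) -> (x_j, b, x_i)] of the coordinates [i], [j], [n]. *)
Definition relabel (p : nat -> R) : nat -> R := fun l => p (swap i j (swap j n l)).

Lemma relabel_i p : relabel p i = p j.
Proof.
  unfold relabel, swap.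
  destruct (Nat.eq_dec i j); [congruence|]. destruct (Nat.eq_dec i n); [lia|].
  destruct (Nat.eq_dec i i); congruence.
Qed.

Lemma relabel_j p : relabel p j = p n.
Proof.
  unfold relabel, swap. destruct (Nat.eq_dec j j); [|congruence].
  destruct (Nat.eq_dec n i); [lia|]. destruct (Nat.eq_dec n j); [lia|reflexivity].
Qed.

Lemma relabel_n p : relabel p n = p i.
Proof.
  unfold relabel, swap. destruct (Nat.eq_dec n j); [lia|].
  destruct (Nat.eq_dec n n); [|congruence]. destruct (Nat.eq_dec j i); [congruence|].
  destruct (Nat.eq_dec j j); congruence.
Qed.

Lemma relabel_other p l : l <> i -> l <> j -> l <> n -> relabel p l = p l.
Proof.
  intros. unfold relabel, swap.
  destruct (Nat.eq_dec l j); [congruence|]. destruct (Nat.eq_dec l n); [congruence|].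
  destruct (Nat.eq_dec l i); [congruence|]. destruct (Nat.eq_dec l j); [congruence|reflexivity].
Qed.

Lemma dot_drop2_relabel p : dot_drop2 (relabel p) = dot_drop2 p.
Proof.
  apply fsum_ext. intros l Hl. unfold replace_coord.
  destruct (Nat.eq_dec l i); [ring|]. destruct (Nat.eq_dec l j); [ring|].
  rewrite relabel_other by lia. reflexivity.
Qed.

Lemma relabel_unit_cube p : (forall l, (l <= n)%nat -> 0 <= p l <= 1) ->
  forall l, (l <= n)%nat -> 0 <= relabel p l <= 1.
Proof.
  intros Hp l Hl.
  destruct (Nat.eq_dec l i) as [->|]; [rewrite relabel_i; apply Hp; lia|].
  destruct (Nat.eq_dec l j) as [->|]; [rewrite relabel_j; apply Hp; lia|].
  destruct (Nat.eq_dec l n) as [->|]; [rewrite relabel_n; apply Hp; lia|].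
  rewrite relabel_other by auto. apply Hp, Hl.
Qed.

Lemma Piv_j_split p : Piv n w q j p ->
  (Piv n w q i p /\ q <= dot_drop j p + w j * p n) \/
  (Piv n w q i (relabel p) /\ dot_drop j (relabel p) + w j * relabel p n < q).
Proof.
  intros Hp. apply Piv_iff in Hp as [Hcube [H1 H2]]; auto.
  rewrite dot_drop_j in H1, H2.
  destruct (Rle_dec q (dot_drop i p + w i * p n)) as [Hq|Hq].
  - left. split; [|rewrite dot_drop_j; lra].
    apply Piv_iff; auto. rewrite dot_drop_i in *. split; [exact Hcube|split]; lra.
  - right. rewrite dot_drop_i in Hq.
    destruct (exchange_ineq q (dot_drop2 p) (p i) (p n) (p j) (w i) (w j)) as [K1 K2];
      auto; try lra.
    split.
    + apply Piv_iff; auto. rewrite !dot_drop_i, dot_drop2_relabel, relabel_i, relabel_j, relabel_n.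
      split; [apply relabel_unit_cube; auto|split]; lra.
    + rewrite dot_drop_j, dot_drop2_relabel, relabel_i, relabel_n. lra.
Qed.

Lemma Piv_cover_transfer c eps : box_cover_bound (S n) (Piv n w q i) c -> 0 < eps ->
  box_cover_bound (S n) (Piv n w q j) (c + eps).
Proof.
  intros Hc Heps.
  destruct (halfspace_split_cover n (Piv n w q i) (replace_coord w j 0) (w j) q c eps Hw0 Heps Hc)
    as (F1 & F2 & Hcov1 & Hcov2 & Hvol).
  set (F2' := fun k => map (swap_box i j) (map (swap_box j n) (F2 k))).
  assert (Hcov2' : boxes_cover (S n) F2'
     (fun p => Piv n w q i (relabel p) /\ dot_drop j (relabel p) + w j * relabel p n < q)).
  { pose proof (boxes_cover_swap (S n) _ _ j n ltac:(lia) ltac:(lia) Hcov2) as Hcov_jn.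
    exact (boxes_cover_swap (S n) _ _ i j ltac:(lia) ltac:(lia) Hcov_jn). }
  apply (box_cover_of_family (fun k => F1 k ++ F2' k)).
  - apply (boxes_cover_app _ _ _ _ _ _ Hcov1 Hcov2'). apply Piv_j_split.
  - intros K. unfold F2'. rewrite family_vol_app, !family_vol_swap by lia. apply Hvol.
Qed.
End Pivotal.

Theorem mainTheorem9 (n : nat) (w : nat -> R) (q : R) (i j : nat) :
  (i < n)%nat -> (j < n)%nat -> i <> j ->
  w j <= w i -> 0 < w j ->
  exists vi vj : R,
    is_Vol (S n) (Piv n w q i) vi /\
    is_Vol (S n) (Piv n w q j) vj /\
    vj <= vi.
Proof.
  intros Hi Hj Hij Hw Hw0.
  assert (Hfinite : forall k, exists c, box_cover_bound (S n) (Piv n w q k) c).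
  { intros k. eexists. apply (box_cover_of_box n _ (Box (fun _ => 0) (fun _ => 1))).
    - intros l. simpl. lra.
    - intros p [Hcube _] l Hl. apply Hcube. lia. }
  destruct (is_Vol_exists _ _ (Hfinite i)) as [vi Hvi].
  destruct (is_Vol_exists _ _ (Hfinite j)) as [vj Hvj].
  exists vi, vj. split; [exact Hvi|split; [exact Hvj|]].
  apply (is_Vol_le _ _ _ _ _ Hvi Hvj). intros c eps Hc Heps.
  apply (Piv_cover_transfer n w q i j); auto.
Qed.
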